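(* Let $p\geq1$, $n\geq2$, $\sigma>0$. For $i=1,2$ let $1\leq\Delta_i\leq n$, $0<\kappa_i<\sigma^2$, $u_i\in S^{p-1}$, and let $V_i\in\mathbb{R}^{pn\times pn}$ be the block diagonal matrix $V_i=\mathrm{Diag}(V_{1,i},\ldots,V_{n,i})$ with $V_{j,i}=\sigma^2I_p-\kappa_iu_iu_i^\top$ for $j\leq\Delta_i$ and $V_{j,i}=\sigma^2I_p$ for $j>\Delta_i$. Assume $\Delta_1\leq\Delta_2$. If $X\sim\mathrm{N}(0,\sigma^2I_{pn})$, then $$\mathbb{E}\Big\{\frac{\phi_{V_1}(X)\phi_{V_2}(X)}{\phi^2_{\sigma^2I}(X)}\Big\}\leq\exp\Big[\frac12\langle u_1,u_2\rangle^2\Big\{\sqrt{\tfrac{\Delta_1}{\Delta_2}}(\Delta_2\alpha_2^2)^{1/2}(\Delta_1\alpha_1^2)^{1/2}\wedge\Delta_1\alpha_1\Big\}\Big],$$ where $\alpha_i=\kappa_i(\sigma^2-\kappa_i)^{-1}$ for $i=1,2$.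
   Context: For a positive definite matrix $M$, $\phi_M$ denotes the density of the centered Gaussian distribution $\mathrm{N}(0,M)$; $S^{p-1}$ is the Euclidean unit sphere in $\mathbb{R}^p$. *)

From mathcomp Require Import all_boot all_order all_algebra.
From mathcomp Require Import all_classical all_reals all_analysis.
Set Implicit Arguments. Unset Strict Implicit. Unset Printing Implicit Defensive.
Import Order.TTheory GRing.Theory Num.Theory.
Local Open Scope ring_scope.

Definition vecN (R : realType) (N : nat) (x : nat -> R) : 'cV[R]_N :=
  \col_(i < N) x i.

Definition gauss_density (R : realType) (N : nat) (M : 'M[R]_N) (x : 'cV[R]_N) : R :=
  (Num.sqrt ((2 * pi) ^+ N * \det M))^-1 *
  expR (- (1/2) * ((x^T *m invmx M *m x) ord0 ord0)).

(* Lebesgue integral over R^N of a function of the first N coordinates,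
   written as the iterated integral dx_0 dx_1 ... dx_{N-1}
   (equal to the integral w.r.t. N-dimensional Lebesgue measure for
   nonnegative measurable integrands, by Tonelli). *)
Fixpoint lebN (R : realType) (N : nat) (f : (nat -> R) -> \bar R) : \bar R :=
  match N with
  | 0 => f (fun _ => 0)
  | N'.+1 => (\int[@lebesgue_measure R]_(t in setT)
               lebN N' (fun y => f (fun k => if k is k'.+1 then y k' else t)))%E
  end.

Definition gauss_expect (R : realType) (N : nat) (s2 : R) (g : 'cV[R]_N -> R) : \bar R :=
  lebN N (fun x => (g (vecN N x) * gauss_density (s2 *: 1%:M) (vecN N x))%:E).

(* Block-diagonal matrix Diag(V_1,...,V_n) in R^{pn x pn}, with
   V_j = s2 I_p - kappa u u^T for j <= Delta (1-based) and s2 I_p otherwise.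
   Coordinate a of R^{pn} lies in block a %/ p (0-based), position a %% p. *)
(* k-th coordinate of u (0 if k >= p). *)
Definition ucoord (R : realType) (p : nat) (u : 'cV[R]_p) (k : nat) : R :=
  \sum_(i < p | nat_of_ord i == k) u i ord0.

Definition Vmat (R : realType) (p n : nat) (s2 kappa : R) (Delta : nat)
    (u : 'cV[R]_p) : 'M[R]_(p * n) :=
  \matrix_(a < p * n, b < p * n)
    ((a == b)%:R * s2
     - (((a %/ p == b %/ p) && (a %/ p < Delta))%N%:R *
        (kappa * ucoord u (a %% p) * ucoord u (b %% p)))).

Definition dotv (R : realType) (p : nat) (u v : 'cV[R]_p) : R :=
  \sum_(i < p) u i ord0 * v i ord0.

From mathcomp Require Import all_boot all_order all_algebra.
From mathcomp Require Import all_classical all_reals all_analysis.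
From mathcomp Require Import ring lra.
Set Implicit Arguments. Unset Strict Implicit. Unset Printing Implicit Defensive.
Import Order.TTheory GRing.Theory Num.Theory.
Local Open Scope ring_scope.

(* Write V_i = sigma^2 I - kappa_i A_i A_i^T, where the columns of A_i are the orthonormal
   vectors e_j (x) u_i, j < Delta_i.  The integrand phi_V1 phi_V2 / phi_(sigma^2 I) is an
   unnormalised centred Gaussian with precision Q = V_1^-1 + V_2^-1 - sigma^-2 I, so the
   expectation equals sqrt (sigma^(2pn) / det (V_1 Q V_2)).  Moreover
   V_1 Q V_2 = sigma^2 (I - kappa_1 kappa_2 sigma^-4 A_1 A_1^T A_2 A_2^T), and Delta_1 <= Delta_2
   gives A_1^T A_2 A_2^T A_1 = <u_1,u_2>^2 I, so by Sylvester's determinant identity the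
   expectation is (1 - x)^(-Delta_1/2) with x = <u_1,u_2>^2 (kappa_1/sigma^2) (kappa_2/sigma^2).
   Finally (1 - x)^-1 = 1 + x/(1-x) <= exp (x/(1-x)), and x/(1-x) is bounded both by
   <u_1,u_2>^2 alpha_1 alpha_2 and by <u_1,u_2>^2 alpha_1; the first argument of the minimum
   in the statement is just Delta_1 alpha_1 alpha_2. *)

Section QuadraticForm.
Variable R : realFieldType.

Definition quad_form N (Q : 'M[R]_N) (v : 'cV[R]_N) : R := (v^T *m Q *m v) 0 0.

Definition posdef N (Q : 'M[R]_N) : Prop :=
  Q^T = Q /\ forall v, v != 0 -> 0 < quad_form Q v.

Lemma quad_form0 N (Q : 'M[R]_N) : quad_form Q 0 = 0.
Proof. by rewrite /quad_form mulmx0 mxE. Qed.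

Lemma quad_formD N (A B : 'M[R]_N) v : quad_form (A + B) v = quad_form A v + quad_form B v.
Proof. by rewrite /quad_form mulmxDr mulmxDl mxE. Qed.

Lemma quad_formB N (A B : 'M[R]_N) v : quad_form (A - B) v = quad_form A v - quad_form B v.
Proof. by rewrite /quad_form mulmxBr mulmxBl !mxE. Qed.

Lemma quad_formZ N c (A : 'M[R]_N) v : quad_form (c *: A) v = c * quad_form A v.
Proof. by rewrite /quad_form -scalemxAr -scalemxAl mxE. Qed.

Lemma quad_form1 N (v : 'cV[R]_N) : quad_form 1%:M v = \sum_i v i 0 ^+ 2.
Proof. by rewrite /quad_form mulmx1 mxE; apply: eq_bigr => i _; rewrite mxE expr2. Qed.

Lemma quad_form1_ge0 N (v : 'cV[R]_N) : 0 <= quad_form 1%:M v.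
Proof. by rewrite quad_form1 sumr_ge0 // => i _; rewrite sqr_ge0. Qed.

Lemma quad_form1_gt0 N (v : 'cV[R]_N) : v != 0 -> 0 < quad_form 1%:M v.
Proof.
move=> v0; rewrite lt_def quad_form1_ge0 andbT; apply: contra v0.
rewrite quad_form1 => /eqP/psumr_eq0P v2_eq0; apply/eqP/matrixP => i j.
by rewrite ord1 mxE; apply/eqP; rewrite -sqrf_eq0 v2_eq0 // => k _; rewrite sqr_ge0.
Qed.

Lemma quad_form_mul_tr N D (A : 'M[R]_(N, D)) v :
  quad_form (A *m A^T) v = quad_form 1%:M (A^T *m v).
Proof. by rewrite /quad_form mulmx1 trmx_mul trmxK !mulmxA. Qed.

Lemma posdef_unitmx N (Q : 'M[R]_N) : posdef Q -> Q \in unitmx.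
Proof.
move=> [_ Qpos]; rewrite unitmxE unitfE; apply/negP => /det0P[v v0 vQ].
have := Qpos v^T; rewrite trmx_eq0 => /(_ v0).
by rewrite /quad_form trmxK vQ mul0mx mxE ltxx.
Qed.

Lemma posdef_drsubmx N (Q : 'M[R]_(1 + N)) : posdef Q -> posdef (drsubmx Q).
Proof.
move=> [QT Qpos]; split=> [|z z0]; first by rewrite trmx_drsub QT.
have -> : quad_form (drsubmx Q) z = quad_form Q (col_mx 0 z).
  rewrite /quad_form -[in RHS](submxK Q) tr_col_mx trmx0 mul_row_block mul_row_col.
  by rewrite !mul0mx mulmx0 !add0r.
by apply: Qpos; rewrite col_mx_eq0 negb_and z0 orbT.
Qed.

Definition schur_compl N (Q : 'M[R]_(1 + N)) : R :=
  ulsubmx Q 0 0 - ((dlsubmx Q)^T *m (invmx (drsubmx Q) *m dlsubmx Q)) 0 0.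

Lemma quad_form_col_mx N (Q : 'M[R]_(1 + N)) (t : R) (w : 'cV[R]_N) :
  Q^T = Q -> drsubmx Q \in unitmx ->
  quad_form Q (col_mx t%:M w) =
  quad_form (drsubmx Q) (w + t *: (invmx (drsubmx Q) *m dlsubmx Q)) + schur_compl Q * t ^+ 2.
Proof.
move=> QT uC; rewrite /schur_compl.
set C := drsubmx Q; set b := dlsubmx Q; set r := invmx C *m b.
have CT : C^T = C by rewrite /C trmx_drsub QT.
have urQ : ursubmx Q = b^T by rewrite /b trmx_dlsub QT.
have ulQ : ulsubmx Q = (ulsubmx Q 0 0)%:M by rewrite {1}[ulsubmx Q]mx11_scalar.
have Cr : C *m r = b by rewrite /r mulKVmx.
have rC : r^T *m C = b^T by rewrite -[in LHS]CT -trmx_mul Cr.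
have tr11 (M : 'M[R]_1) : M^T = M by apply/matrixP => i j; rewrite !ord1 mxE.
have wb : w^T *m b = b^T *m w by rewrite -[LHS]tr11 trmx_mul trmxK.
rewrite /quad_form -[in LHS](submxK Q) -/C -/b ulQ urQ tr_col_mx tr_scalar_mx.
rewrite mul_row_block mul_row_col !mul_scalar_mx.
rewrite (@mulmxDl _ 1 1 1) (@mulmxDl _ 1 N 1) !mul_mx_scalar -!scalemxAl wb.
rewrite linearD /= linearZ /= (_ : (w + t *: r)^T = w^T + t *: r^T); last first.
  by rewrite linearD /= linearZ.
rewrite (@mulmxDl _ 1 N N) !(@mulmxDl _ 1 N 1).
rewrite -!scalemxAl -!scalemxAr rC -!mulmxA Cr wb !mxE eqxx mulr1n.
ring.
Qed.

Lemma det_schur_compl N (Q : 'M[R]_(1 + N)) : Q^T = Q -> drsubmx Q \in unitmx ->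
  \det Q = schur_compl Q * \det (drsubmx Q).
Proof.
move=> QT uC; rewrite /schur_compl.
set C := drsubmx Q; set b := dlsubmx Q; set r := invmx C *m b.
have CT : C^T = C by rewrite /C trmx_drsub QT.
have urQ : ursubmx Q = b^T by rewrite /b trmx_dlsub QT.
have rC : r^T *m C = b^T by rewrite -[in LHS]CT -trmx_mul /r mulKVmx.
have rb : r^T *m b = b^T *m r.
  by rewrite -[LHS]trmxK trmx_mul trmxK; apply/matrixP => i j; rewrite !ord1 mxE.
set L : 'M[R]_(1 + N) := block_mx 1%:M (- r^T) 0 1%:M.
have LQ : L *m Q = block_mx (ulsubmx Q - b^T *m r) 0 b C.
  rewrite /L -[in LHS](submxK Q) mulmx_block -/C -/b urQ.
  by rewrite !mul1mx !mul0mx !add0r !mulNmx rC rb subrr.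
have := det_mulmx L Q; rewrite det_ublock !det1 mulr1 mul1r LQ det_lblock det_mx11 => <-.
by rewrite !mxE.
Qed.

Lemma schur_compl_gt0 N (Q : 'M[R]_(1 + N)) : posdef Q -> 0 < schur_compl Q.
Proof.
move=> PQ; have [QT Qpos] := PQ.
have uC := posdef_unitmx (posdef_drsubmx PQ).
have := Qpos (col_mx 1%:M (- (invmx (drsubmx Q) *m dlsubmx Q))).
rewrite quad_form_col_mx // scale1r addNr quad_form0 add0r expr1n mulr1; apply.
rewrite col_mx_eq0 negb_and; apply/orP; left.
by apply/eqP => /matrixP/(_ 0 0); rewrite !mxE /= => /eqP; rewrite oner_eq0.
Qed.

Lemma posdef_det_gt0 N (Q : 'M[R]_N) : posdef Q -> 0 < \det Q.
Proof.
elim: N Q => [|N IH] Q PQ; first by rewrite det_mx00.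
have PC := posdef_drsubmx (PQ : posdef (Q : 'M[R]_(1 + N))).
rewrite (det_schur_compl PQ.1 (posdef_unitmx PC)) mulr_gt0 ?IH //.
exact: schur_compl_gt0.
Qed.

Lemma det_sylvester m n (A : 'M[R]_(m, n)) (B : 'M[R]_(n, m)) :
  \det (1%:M - A *m B) = \det (1%:M - B *m A).
Proof.
have E1 : block_mx 1%:M A B 1%:M = block_mx 1%:M 0 B 1%:M *m block_mx 1%:M A 0 (1%:M - B *m A).
  by rewrite mulmx_block !mul1mx ?mul0mx ?mulmx0 ?addr0 ?add0r ?mulmx1 addrC subrK.
have E2 : block_mx 1%:M A B 1%:M = block_mx 1%:M A 0 1%:M *m block_mx (1%:M - A *m B) 0 B 1%:M.
  by rewrite mulmx_block !mul1mx ?mul0mx ?mulmx0 ?addr0 ?add0r ?mulmx1 subrK.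
have := congr1 determinant E1; rewrite E2 !det_mulmx.
by rewrite det_lblock det_ublock det_lblock det_ublock !det1 !mul1r !mulr1.
Qed.

End QuadraticForm.

Section SpikedCovariance.
Variable R : realFieldType.

Definition spiked_cov N D (s2 k : R) (A : 'M[R]_(N, D)) : 'M[R]_N :=
  s2 *: 1%:M - k *: (A *m A^T).

Section OneSpike.
Variables (N D : nat) (A : 'M[R]_(N, D)).
Hypothesis AtA : A^T *m A = 1%:M.

Lemma mul_tr_idem : A *m A^T *m (A *m A^T) = A *m A^T.
Proof. by rewrite mulmxA -(mulmxA A) AtA mulmx1. Qed.

Lemma invmx_spiked_cov s2 k : s2 != 0 -> s2 != k ->
  invmx (spiked_cov s2 k A) = s2^-1 *: (1%:M + (k / (s2 - k)) *: (A *m A^T)).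
Proof.
move=> s2_neq0 s2_neqk; set W := _ *: _.
have VW : spiked_cov s2 k A *m W = 1%:M.
  rewrite -scalemxAr mulmxDr mulmx1 -scalemxAr mulmxBl -!scalemxAl mul1mx mul_tr_idem.
  apply/matrixP => i j; rewrite !mxE; field.
  by rewrite subr_eq0 s2_neqk s2_neq0.
by have := mulKmx (mulmx1_unit VW).1 W; rewrite VW mulmx1.
Qed.

Lemma det_spiked_cov s2 k : s2 != 0 ->
  \det (spiked_cov s2 k A) = s2 ^+ N * (1 - k / s2) ^+ D.
Proof.
move=> s2_neq0; have -> : spiked_cov s2 k A = s2 *: (1%:M - (k / s2) *: (A *m A^T)).
  by rewrite /spiked_cov scalerBr scalerA mulrCA divff // mulr1.
by rewrite detZ scalemxAl det_sylvester -scalemxAr AtA scalemx1 -raddfB /= det_scalar.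
Qed.

Lemma det_spiked_cov_gt0 s2 k : 0 < s2 -> k < s2 -> 0 < \det (spiked_cov s2 k A).
Proof.
move=> s2_gt0 k_lt; rewrite det_spiked_cov ?gt_eqF // mulr_gt0 ?exprn_gt0 //.
by rewrite subr_gt0 ltr_pdivrMr // mul1r.
Qed.

End OneSpike.

Section TwoSpikes.
Variables (N D1 D2 : nat) (A1 : 'M[R]_(N, D1)) (A2 : 'M[R]_(N, D2)) (s2 k1 k2 : R).
Hypotheses (A1tA1 : A1^T *m A1 = 1%:M) (A2tA2 : A2^T *m A2 = 1%:M).
Hypotheses (s2_gt0 : 0 < s2) (k1_ge0 : 0 <= k1) (k1_lt : k1 < s2).
Hypotheses (k2_ge0 : 0 <= k2) (k2_lt : k2 < s2).

Let V1 := spiked_cov s2 k1 A1.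
Let V2 := spiked_cov s2 k2 A2.
Let Q := invmx V1 + invmx V2 - s2^-1 *: 1%:M.

Let s2_neq0 : s2 != 0. Proof. by rewrite gt_eqF. Qed.
Let s2_neqk1 : s2 != k1. Proof. by rewrite gt_eqF. Qed.
Let s2_neqk2 : s2 != k2. Proof. by rewrite gt_eqF. Qed.

Lemma posdef_spiked_mix : posdef Q.
Proof.
rewrite /Q /V1 /V2 !invmx_spiked_cov //.
set a1 := k1 / (s2 - k1); set a2 := k2 / (s2 - k2).
have a1_ge0 : 0 <= a1 by rewrite divr_ge0 // subr_ge0 ltW.
have a2_ge0 : 0 <= a2 by rewrite divr_ge0 // subr_ge0 ltW.
split=> [|v v_neq0].
  have P1T : (A1 *m A1^T)^T = A1 *m A1^T by rewrite trmx_mul trmxK.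
  have P2T : (A2 *m A2^T)^T = A2 *m A2^T by rewrite trmx_mul trmxK.
  apply/matrixP => i j; rewrite -[in RHS]P1T -[in RHS]P2T !mxE.
  by rewrite [j == i]eq_sym.
rewrite quad_formB !quad_formD !quad_formZ !quad_formD !quad_formZ !quad_form_mul_tr.
have := quad_form1_gt0 v_neq0.
have := mulr_ge0 a1_ge0 (quad_form1_ge0 (A1^T *m v)).
have := mulr_ge0 a2_ge0 (quad_form1_ge0 (A2^T *m v)).
set q := quad_form 1%:M v; set x1 := quad_form 1%:M (A1^T *m v).
set x2 := quad_form 1%:M (A2^T *m v) => h2 h1 h0.
rewrite (_ : _ - _ = s2^-1 * (q + a1 * x1 + a2 * x2)); last by ring.
by rewrite mulr_gt0 ?invr_gt0 //; lra.
Qed.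

Lemma spiked_mix_sandwich :
  V1 *m Q *m V2 = s2 *: (1%:M - (k1 * k2 / s2 ^+ 2) *: (A1 *m A1^T *m (A2 *m A2^T))).
Proof.
have V1W1 : V1 *m invmx V1 = 1%:M.
  by rewrite mulmxV // unitmxE unitfE gt_eqF // det_spiked_cov_gt0.
have W2V2 : invmx V2 *m V2 = 1%:M.
  by rewrite mulVmx // unitmxE unitfE gt_eqF // det_spiked_cov_gt0.
rewrite /Q [V1 *m _]mulmxBr [V1 *m (_ + _)]mulmxDr V1W1 mulmxBl mulmxDl mul1mx.
rewrite -[V1 *m invmx V2 *m V2]mulmxA W2V2 mulmx1.
rewrite -scalemxAr mulmx1 -scalemxAl /V1 /V2 /spiked_cov.
rewrite mulmxBl !mulmxBr -!scalemxAl -!scalemxAr !mul1mx !mulmx1.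
by apply/matrixP => i j; rewrite !mxE; field.
Qed.

Lemma det_spiked_mix c : A1^T *m (A2 *m A2^T) *m A1 = c *: 1%:M ->
  \det (V1 *m Q *m V2) = s2 ^+ N * (1 - c * (k1 / s2) * (k2 / s2)) ^+ D1.
Proof.
move=> A1P2A1; rewrite spiked_mix_sandwich detZ; congr (_ * _).
rewrite -mulmxA scalemxAl det_sylvester -scalemxAr A1P2A1 scalerA scalemx1 -raddfB /=.
by rewrite det_scalar; congr (_ ^+ _); field.
Qed.

End TwoSpikes.
End SpikedCovariance.

Section GaussianIntegral.
Variable R : realType.

Lemma integral_gauss1 (s m c : R) : 0 < s ->
  (\int[@lebesgue_measure R]_(t in setT) (c * expR (- (1/2) * (s * (t - m) ^+ 2)))%:E)%E
  = (c * Num.sqrt (2 * pi / s))%:E.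
Proof.
move=> s_gt0; set sd := Num.sqrt s^-1.
have sd_neq0 : sd != 0 by rewrite sqrtr_eq0 -ltNge invr_gt0.
have sd2 : sd ^+ 2 = s^-1 by rewrite sqr_sqrtr // invr_ge0 ltW.
have peak : normal_peak sd = (Num.sqrt (2 * pi / s))^-1.
  by rewrite /normal_peak sd2 -mulr_natr; congr (Num.sqrt _)^-1; field; rewrite gt_eqF.
have pdf t : c * expR (- (1/2) * (s * (t - m) ^+ 2)) =
    (c * Num.sqrt (2 * pi / s)) * normal_pdf m sd t.
  rewrite normal_pdfE // peak /normal_fun sd2.
  have -> : - (t - m) ^+ 2 / (s^-1 *+ 2) = - (1/2) * (s * (t - m) ^+ 2).
    by rewrite -mulr_natr; field; rewrite gt_eqF.
  by field; rewrite sqrtr_eq0 -ltNge divr_gt0 // mulr_gt0 // pi_gt0.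
under eq_integral do rewrite pdf EFinM.
by rewrite integralZl ?integral_normal_pdf ?mule1 //; exact: integrable_normal_pdf.
Qed.

Lemma vecN_cons N (y : nat -> R) t :
  vecN N.+1 (fun k => if k is k'.+1 then y k' else t) = col_mx t%:M (vecN N y) :> 'cV[R]_(1 + N).
Proof.
apply/matrixP => i j; rewrite !mxE; case: splitP => k /= ->; rewrite !mxE //.
by rewrite !ord1 mulr1n.
Qed.

Lemma lebN_gauss N (Q : 'M[R]_N) (K : R) (m : 'cV[R]_N) : posdef Q -> 0 <= K ->
  lebN N (fun x => (K * expR (- (1/2) * quad_form Q (vecN N x - m)))%:E)
  = (K * Num.sqrt ((2 * pi) ^+ N / \det Q))%:E.
Proof.
elim: N Q K m => [|N IH] Q K m PQ K_ge0.
  by rewrite /= det_mx00 expr0 divr1 sqrtr1 mulr1 [vecN 0 _ - m]flatmx0 quad_form0 mulr0 expR0 mulr1.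
have PC := posdef_drsubmx (PQ : posdef (Q : 'M[R]_(1 + N))).
have s_gt0 := schur_compl_gt0 PQ.
have uC := posdef_unitmx PC.
set C := drsubmx (Q : 'M[R]_(1 + N)) in PC uC.
set r := invmx C *m dlsubmx (Q : 'M[R]_(1 + N)).
set s := schur_compl Q in s_gt0.
set m0 := usubmx (m : 'cV[R]_(1 + N)) 0 0; set m' := dsubmx (m : 'cV[R]_(1 + N)).
have mE : m = col_mx m0%:M m' by rewrite -[LHS](vsubmxK (m : 'cV[R]_(1 + N))) -mx11_scalar.
have slice t y : quad_form Q (vecN N.+1 (fun k => if k is k'.+1 then y k' else t) - m) =
    quad_form C (vecN N y - (m' - (t - m0) *: r)) + s * (t - m0) ^+ 2.
  rewrite vecN_cons mE (@opp_col_mx _ 1 N 1) (@add_col_mx _ 1 N 1) -raddfB /=.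
  by rewrite quad_form_col_mx ?PQ.1 // opprB addrA addrAC.
transitivity (\int[@lebesgue_measure R]_(t in setT)
   ((K * Num.sqrt ((2 * pi) ^+ N / \det C)) * expR (- (1/2) * (s * (t - m0) ^+ 2)))%:E)%E.
  apply: eq_integral => t _ /=.
  transitivity (lebN N (fun y => ((K * expR (- (1/2) * (s * (t - m0) ^+ 2))) *
      expR (- (1/2) * quad_form C (vecN N y - (m' - (t - m0) *: r))))%:E)).
    by congr (lebN N _); apply/funext => y; rewrite slice mulrDr expRD; congr EFin; ring.
  by rewrite IH ?mulr_ge0 ?expR_ge0 //; congr EFin; ring.
rewrite integral_gauss1 // -mulrA -sqrtrM; last first.
  by rewrite divr_ge0 ?exprn_ge0 ?mulr_ge0 ?pi_ge0 // ltW // posdef_det_gt0.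
rewrite (det_schur_compl PQ.1 uC) -/s -/C exprS; congr (K * Num.sqrt _)%:E; field.
by rewrite !gt_eqF ?posdef_det_gt0.
Qed.

Lemma gauss_expect_density_ratio N (s2 : R) (V1 V2 : 'M[R]_N) :
  0 < s2 -> 0 < \det V1 -> 0 < \det V2 ->
  posdef (invmx V1 + invmx V2 - s2^-1 *: 1%:M) ->
  gauss_expect s2 (fun x => gauss_density V1 x * gauss_density V2 x /
                            gauss_density (s2 *: 1%:M) x ^+ 2)
  = (Num.sqrt (s2 ^+ N / \det (V1 *m (invmx V1 + invmx V2 - s2^-1 *: 1%:M) *m V2)))%:E.
Proof.
move=> s2_gt0 dV1 dV2 PQ; set Q := _ - _ in PQ *.
have dQ := posdef_det_gt0 PQ.
have dS : \det (s2 *: 1%:M : 'M[R]_N) = s2 ^+ N by rewrite detZ det1 mulr1.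
have c_gt0 : 0 < (2 * pi) ^+ N :> R by rewrite exprn_gt0 // mulr_gt0 // pi_gt0.
pose c (M : 'M[R]_N) : R := Num.sqrt ((2 * pi) ^+ N * \det M).
have c_gt0M M : 0 < \det M -> 0 < c M by move=> ?; rewrite sqrtr_gt0 mulr_gt0.
pose K := c (s2 *: 1%:M) / (c V1 * c V2).
have -> : gauss_expect s2 (fun x => gauss_density V1 x * gauss_density V2 x /
                                    gauss_density (s2 *: 1%:M) x ^+ 2) =
    lebN N (fun x => (K * expR (- (1/2) * quad_form Q (vecN N x - 0)))%:E).
  rewrite /gauss_expect; congr lebN; apply/funext => y; congr EFin.
  have densityE M : gauss_density M (vecN N y) =
      (c M)^-1 * expR (- (1/2) * quad_form (invmx M) (vecN N y)) by [].
  have invS : invmx (s2 *: 1%:M : 'M[R]_N) = s2^-1 *: 1%:M.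
    by rewrite !scalemx1 invmx_scalar.
  rewrite subr0 !densityE invS /Q quad_formB quad_formD.
  rewrite mulrBr mulrDr !expRD expRN /K.
  by field; rewrite !gt_eqF ?expR_gt0 ?c_gt0M ?dS ?exprn_gt0.
rewrite lebN_gauss // ?divr_ge0 ?mulr_ge0 ?ltW ?c_gt0M ?dS ?exprn_gt0 //.
congr EFin; rewrite /K /c !det_mulmx dS.
move: (ltW c_gt0) (ltW (exprn_gt0 N s2_gt0)) (ltW dV1) (ltW dV2) (ltW dQ) => c0 s0 d10 d20 dQ0.
rewrite !sqrtrM ?mulr_ge0 // !sqrtrV ?mulr_ge0 // !sqrtrM ?mulr_ge0 //.
by field; rewrite !gt_eqF ?sqrtr_gt0.
Qed.

End GaussianIntegral.

Section BlockFrame.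
Variable R : realType.

Lemma ucoordE p (u : 'cV[R]_p) (i : 'I_p) : ucoord u i = u i 0.
Proof. by rewrite /ucoord (big_pred1 i). Qed.

Lemma dotvC p (u v : 'cV[R]_p) : dotv u v = dotv v u.
Proof. by apply: eq_bigr => i _; rewrite mulrC. Qed.

Lemma dotv_sqr_le1 p (u v : 'cV[R]_p) : dotv u u = 1 -> dotv v v = 1 -> dotv u v ^+ 2 <= 1.
Proof.
rewrite /dotv; set r := \sum_i u i 0 * v i 0 => uu vv.
have : 0 <= \sum_i (u i 0 - r * v i 0) ^+ 2 by rewrite sumr_ge0 // => i _; rewrite sqr_ge0.
have -> : \sum_i (u i 0 - r * v i 0) ^+ 2 =
    \sum_i (u i 0 * u i 0 - (2 * r) * (u i 0 * v i 0) + r ^+ 2 * (v i 0 * v i 0)).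
  by apply: eq_bigr => i _; ring.
by rewrite big_split sumrB /= -!mulr_sumr uu vv -/r; lra.
Qed.

Lemma sum_block_coord p n (F : nat -> R) j : (0 < p)%N -> (j < n)%N ->
  \sum_(a < p * n) (((a %/ p)%N == j)%:R * F (a %% p)%N) = \sum_(i < p) F i.
Proof.
move=> p_gt0 jn; rewrite -(big_mkord xpredT (fun a => ((a %/ p)%N == j)%:R * F (a %% p)%N)).
rewrite -(big_mkord xpredT F).
have le1 : (j * p <= j * p + p)%N by rewrite leq_addr.
have le2 : (j * p + p <= p * n)%N by rewrite -mulSnr mulnC leq_pmul2l.
rewrite (big_cat_nat (leq0n (j * p)) (leq_trans le1 le2)) (big_cat_nat le1 le2) /=.
rewrite big_nat_cond big1 ?add0r => [|a /andP[/andP[_ ha] _]]; last first.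
  by rewrite ltn_eqF ?mul0r // ltn_divLR.
rewrite [X in _ + X]big_nat_cond [X in _ + X]big1 ?addr0 => [|a /andP[/andP[ha _] _]]; last first.
  by rewrite gtn_eqF ?mul0r // leq_divRL // mulSn addnC.
rewrite -{1}[(j * p)%N]add0n big_addn addKn; apply: eq_big_nat => i /andP[_ ip].
by rewrite addnC modnMDl modn_small // divnMDl // divn_small // addn0 eqxx mul1r.
Qed.

Lemma sum_indicator D (c : nat) (g : nat -> R) :
  \sum_(j < D) ((c == j)%:R * g j) = (c < D)%N%:R * g c.
Proof.
case: (ltnP c D) => cD.
  rewrite (bigD1 (Ordinal cD)) //= eqxx mul1r big1 ?addr0 ?mul1r // => j.
  by rewrite -val_eqE /= eq_sym => /negbTE ->; rewrite mul0r.
rewrite big1 ?mul0r // => j _.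
by rewrite gtn_eqF ?mul0r // (leq_trans (ltn_ord j)).
Qed.

Definition frame_mx p n D (u : 'cV[R]_p) : 'M[R]_(p * n, D) :=
  \matrix_(a, j) (((a %/ p)%N == j)%:R * ucoord u (a %% p)%N).

Lemma tr_frame_mx_mul p n D D' (u v : 'cV[R]_p) : (0 < p)%N -> (D <= n)%N ->
  (frame_mx n D u)^T *m frame_mx n D' v = \matrix_(j, k) ((j == k :> nat)%:R * dotv u v).
Proof.
move=> p_gt0 Dn; apply/matrixP => j k; rewrite !mxE.
have jn : (j < n)%N by rewrite (leq_trans (ltn_ord j)).
under eq_bigr do rewrite !mxE.
have [jk|jk] := eqVneq (j : nat) k; last first.
  rewrite mul0r big1 // => a _.
  by have [->|] := eqVneq (a %/ p)%N j; rewrite ?(negbTE jk) /= !mul0r ?mulr0.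
have -> : dotv u v = \sum_(i < p) ucoord u i * ucoord v i.
  by apply: eq_bigr => i _; rewrite !ucoordE.
rewrite mul1r -jk -(sum_block_coord (fun i => ucoord u i * ucoord v i) p_gt0 jn).
by apply: eq_bigr => a _; case: (_ == _); rewrite /= ?mul0r ?mul1r.
Qed.

Lemma frame_mx_orthonormal p n D (u : 'cV[R]_p) : (0 < p)%N -> (D <= n)%N ->
  dotv u u = 1 -> (frame_mx n D u)^T *m frame_mx n D u = 1%:M.
Proof.
move=> p_gt0 Dn uu; rewrite tr_frame_mx_mul // uu.
by apply/matrixP => i j; rewrite !mxE mulr1.
Qed.

Lemma frame_mx_compression p n D1 D2 (u1 u2 : 'cV[R]_p) :
  (0 < p)%N -> (D1 <= D2)%N -> (D2 <= n)%N ->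
  (frame_mx n D1 u1)^T *m (frame_mx n D2 u2 *m (frame_mx n D2 u2)^T) *m frame_mx n D1 u1
  = dotv u1 u2 ^+ 2 *: 1%:M.
Proof.
move=> p_gt0 D12 D2n; rewrite !mulmxA -mulmxA !tr_frame_mx_mul ?(leq_trans D12) //.
apply/matrixP => j l; rewrite !mxE.
under eq_bigr do rewrite !mxE -mulrA.
rewrite (sum_indicator D2 j (fun k => dotv u1 u2 * ((k == l)%:R * dotv u2 u1))).
rewrite (leq_trans (ltn_ord j) D12) mul1r.
by rewrite [dotv u2 u1]dotvC val_eqE; ring.
Qed.

Lemma Vmat_spiked_cov p n s2 k D (u : 'cV[R]_p) :
  Vmat n s2 k D u = spiked_cov s2 k (frame_mx n D u).
Proof.
apply/matrixP => a b; rewrite !mxE.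
under eq_bigr do rewrite !mxE mulrACA -mulrA.
rewrite (sum_indicator D (a %/ p)%N
  (fun j => ((b %/ p)%N == j)%:R * (ucoord u (a %% p)%N * ucoord u (b %% p)%N))).
rewrite [((b %/ p)%N == _)]eq_sym.
by case: ((a %/ p)%N == (b %/ p)%N); case: (a %/ p < D)%N; rewrite /=; ring.
Qed.
End BlockFrame.

Section Odds.
Variable R : realFieldType.

Definition odds (t : R) : R := t / (1 - t).

Lemma odds_ge0 (t : R) : 0 <= t < 1 -> 0 <= odds t.
Proof. by case/andP=> t_ge0 t_lt1; rewrite divr_ge0 // subr_ge0 ltW. Qed.

Section Product.
Variables (r t1 t2 : R).
Hypotheses (r_ge0 : 0 <= r) (r_le1 : r <= 1).
Hypotheses (t1_ge0 : 0 <= t1) (t1_lt1 : t1 < 1) (t2_ge0 : 0 <= t2) (t2_lt1 : t2 < 1).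

Let x_ge0 : 0 <= r * t1 * t2. Proof. by rewrite !mulr_ge0. Qed.
Let x_le : r * t1 * t2 <= t1 * t2.
Proof. by rewrite ler_wpM2r // ler_piMl // ltW. Qed.
Let x_lt1 : r * t1 * t2 < 1. Proof. by rewrite (le_lt_trans x_le) // mulr_ilt1. Qed.

Lemma odds_mul_le_mul : odds (r * t1 * t2) <= r * (odds t1 * odds t2).
Proof.
rewrite /odds (_ : r * (_ * _) = r * t1 * t2 / ((1 - t1) * (1 - t2))); last first.
  by field; rewrite !subr_eq0 !gt_eqF.
apply: ler_wpM2l => //; rewrite lef_pV2 ?posrE ?mulr_gt0 ?subr_gt0 //.
have := x_le; have := ler_piMr t1_ge0 (ltW t2_lt1); have := ler_piMl t2_ge0 (ltW t1_lt1).
rewrite mulrBl !mulrBr !mul1r !mulr1; lra.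
Qed.

Lemma odds_mul_le : odds (r * t1 * t2) <= r * odds t1.
Proof.
rewrite /odds mulrA; apply: ler_pM => //.
- by rewrite invr_ge0 subr_ge0 ltW.
- by rewrite ler_piMr ?mulr_ge0 // ltW.
rewrite lef_pV2 ?posrE ?subr_gt0 // lerD2l lerN2 (le_trans x_le) //.
by rewrite ler_piMr // ltW.
Qed.

End Product.
End Odds.

Section ScalarBounds.
Variable R : realType.

Lemma sqrt_inv_expn_le_expR (D : nat) (x : R) : 0 <= x < 1 ->
  Num.sqrt (((1 - x) ^+ D)^-1) <= expR (1/2 * (D%:R * odds x)).
Proof.
move=> x01; have o_ge0 := odds_ge0 x01; case/andP: x01 => x_ge0 x_lt1.
have -> : ((1 - x) ^+ D)^-1 = (1 + odds x) ^+ D.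
  by rewrite -exprVn /odds; congr (_ ^+ _); field; rewrite subr_eq0 gt_eqF.
rewrite -[X in _ <= X]ger0_norm ?expR_ge0 // -sqrtr_sqr ler_sqrt ?sqr_ge0 //.
rewrite -expRM_natl mulrA (_ : 2%:R * (1/2) = 1 :> R) ?mul1r ?expRM_natl; last by field.
by rewrite lerXn2r ?nnegrE ?expR_ge0 ?addr_ge0 // expR_ge1Dx.
Qed.

Lemma sqrt_inv_expn_odds_le (D : nat) (r t1 t2 : R) :
  0 <= r <= 1 -> 0 <= t1 < 1 -> 0 <= t2 < 1 ->
  Num.sqrt (((1 - r * t1 * t2) ^+ D)^-1)
  <= expR (1/2 * r * Order.min (D%:R * (odds t1 * odds t2)) (D%:R * odds t1)).
Proof.
move=> /andP[r_ge0 r_le1] /andP[t1_ge0 t1_lt1] /andP[t2_ge0 t2_lt1].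
have t12_ge0 : 0 <= t1 * t2 by rewrite mulr_ge0.
have x01 : 0 <= r * t1 * t2 < 1.
  by rewrite -mulrA mulr_ge0 //= (le_lt_trans (ler_piMl t12_ge0 r_le1)) // mulr_ilt1.
apply: le_trans (sqrt_inv_expn_le_expR _ x01) _.
rewrite ler_expR -[in X in _ <= X]mulrA; apply: ler_wpM2l; first by rewrite divr_ge0 ?ler01.
rewrite /Order.min; case: ifP => _; rewrite [X in _ <= X]mulrCA; apply: ler_wpM2l => //.
  exact: odds_mul_le_mul.
exact: odds_mul_le.
Qed.

Lemma sqrt_div_mul_sqrt (d1 d2 a1 a2 : R) : 0 <= d1 -> 0 < d2 -> 0 <= a1 -> 0 <= a2 ->
  Num.sqrt (d1 / d2) * Num.sqrt (d2 * a2 ^+ 2) * Num.sqrt (d1 * a1 ^+ 2) = d1 * (a1 * a2).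
Proof.
move=> d1_ge0 d2_gt0 a1_ge0 a2_ge0.
rewrite (sqrtrM d2^-1 d1_ge0) (sqrtrM (a2 ^+ 2) (ltW d2_gt0)) (sqrtrM (a1 ^+ 2) d1_ge0).
rewrite sqrtrV ?ltW // !sqrtr_sqr !ger0_norm //.
by rewrite -[d1 in RHS](sqr_sqrtr d1_ge0); field; rewrite gt_eqF // sqrtr_gt0.
Qed.

End ScalarBounds.

Theorem lemma9 (R : realType) (p n : nat) (sigma : R)
    (D1 D2 : nat) (k1 k2 : R) (u1 u2 : 'cV[R]_p) :
  (1 <= p)%N -> (2 <= n)%N -> 0 < sigma ->
  (1 <= D1 <= n)%N -> (1 <= D2 <= n)%N ->
  0 < k1 < sigma ^+ 2 -> 0 < k2 < sigma ^+ 2 ->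
  dotv u1 u1 = 1 -> dotv u2 u2 = 1 ->
  (D1 <= D2)%N ->
  let a1 := k1 / (sigma ^+ 2 - k1) in
  let a2 := k2 / (sigma ^+ 2 - k2) in
  (gauss_expect (sigma ^+ 2)
     (fun x : 'cV[R]_(p * n) =>
        gauss_density (Vmat n (sigma ^+ 2) k1 D1 u1) x *
        gauss_density (Vmat n (sigma ^+ 2) k2 D2 u2) x /
        (gauss_density ((sigma ^+ 2) *: 1%:M) x) ^+ 2)%R
   <= (expR ((1/2) * (dotv u1 u2) ^+ 2 *
        Order.min (Num.sqrt (D1%:R / D2%:R) * Num.sqrt (D2%:R * a2 ^+ 2)
                     * Num.sqrt (D1%:R * a1 ^+ 2))
                  (D1%:R * a1)))%R%:E)%E.
Proof.
move=> p_gt0 _ sigma_gt0 /andP[_ D1n] /andP[D2_gt0 D2n] /andP[k1_gt0 k1_lt] /andP[k2_gt0 k2_lt].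
move=> u1_unit u2_unit D12; cbv zeta; set s2 := sigma ^+ 2 in k1_lt k2_lt *.
have s2_gt0 : 0 < s2 by rewrite exprn_gt0.
have oddsE k : 0 < k -> k < s2 -> k / (s2 - k) = odds (k / s2).
  by move=> k_gt0 k_lt; rewrite /odds; field; rewrite subr_eq0 !gt_eqF.
have ratio01 k : 0 < k -> k < s2 -> 0 <= k / s2 < 1.
  by move=> k_gt0 k_lt; rewrite divr_ge0 ?ltW //= ltr_pdivrMr // mul1r.
have F1 := frame_mx_orthonormal p_gt0 D1n u1_unit.
have F2 := frame_mx_orthonormal p_gt0 D2n u2_unit.
have PQ := posdef_spiked_mix F1 F2 s2_gt0 (ltW k1_gt0) k1_lt (ltW k2_gt0) k2_lt.
rewrite !Vmat_spiked_cov gauss_expect_density_ratio ?det_spiked_cov_gt0 //.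
rewrite (det_spiked_mix F1 F2 s2_gt0 k1_lt k2_lt (frame_mx_compression u1 u2 p_gt0 D12 D2n)).
rewrite invfM mulVKf ?expf_neq0 ?gt_eqF // lee_fin !oddsE //.
rewrite sqrt_div_mul_sqrt ?ler0n ?ltr0n ?odds_ge0 ?ratio01 //.
apply: sqrt_inv_expn_odds_le; rewrite ?ratio01 //.
by rewrite sqr_ge0 dotv_sqr_le1.
Qed.
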